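(* For every $n\in\mathbb N$, $TC(M_n)=1$, where $M_n$ is the algebra of complex $n\times n$ matrices.
   Context: All tensor products are minimal. For a unital $C^*$-algebra $A$ let $p_0,p_1:A\to A\otimes A$ be $p_0(a)=a\otimes 1$, $p_1(a)=1\otimes a$, and for $t\in[0,1]$ and a $C^*$-algebra $B$ let $\mathrm{ev}_t:B\otimes C[0,1]\to B$ be evaluation at $t$. The topological complexity $TC(A)$ is the minimal number $n$ such that there exist $C^*$-algebras $B_1,\dots,B_n$ with surjective $*$-homomorphisms $q_i:A\otimes A\to B_i$ satisfying $\bigcap_{i=1}^n\ker q_i=\{0\}$, together with $*$-homomorphisms $\sigma_i:A\to B_i\otimes C[0,1]$ such that $\mathrm{ev}_k\circ\sigma_i=q_i\circ p_k$ for $k=0,1$ and all $i$; $TC(A)=\infty$ if no such $n$ exists. *)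

(* with complex numbers R[i] from mathcomp-real-closed over an
   arbitrary R : realType (all such are isomorphic to the usual reals). *)
From HB Require Import structures.
From mathcomp Require Import all_boot all_order all_algebra.
From mathcomp Require Import reals.
From mathcomp Require Export complex mxtens.
Set Implicit Arguments. Unset Strict Implicit. Unset Printing Implicit Defensive.
Import Order.TTheory GRing.Theory Num.Theory.
Local Open Scope ring_scope.

Record CstarAlg (R : realType) := {
  cs_car :> lmodType R[i];
  cs_mul : cs_car -> cs_car -> cs_car;
  cs_star : cs_car -> cs_car;
  cs_norm : cs_car -> R;
  cs_mulA : forall x y z, cs_mul x (cs_mul y z) = cs_mul (cs_mul x y) z;
  cs_mulDl : forall x y z, cs_mul (x + y) z = cs_mul x z + cs_mul y z;
  cs_mulDr : forall x y z, cs_mul x (y + z) = cs_mul x y + cs_mul x z;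
  cs_mulZl : forall (c : R[i]) x y, cs_mul (c *: x) y = c *: cs_mul x y;
  cs_mulZr : forall (c : R[i]) x y, cs_mul x (c *: y) = c *: cs_mul x y;
  cs_starK : forall x, cs_star (cs_star x) = x;
  cs_starD : forall x y, cs_star (x + y) = cs_star x + cs_star y;
  cs_starZ : forall (c : R[i]) x, cs_star (c *: x) = conjc c *: cs_star x;
  cs_starM : forall x y, cs_star (cs_mul x y) = cs_mul (cs_star y) (cs_star x);
  cs_norm_ge0 : forall x, 0 <= cs_norm x;
  cs_norm_eq0 : forall x, cs_norm x = 0 -> x = 0;
  cs_normD : forall x y, cs_norm (x + y) <= cs_norm x + cs_norm y;
  cs_normZ : forall (c : R[i]) x, real_complex R (cs_norm (c *: x)) = `|c| * real_complex R (cs_norm x);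
  cs_normM : forall x y, cs_norm (cs_mul x y) <= cs_norm x * cs_norm y;
  cs_normC : forall x, cs_norm (cs_mul (cs_star x) x) = cs_norm x ^+ 2;
  cs_complete : forall u : nat -> cs_car,
    (forall e : R, 0 < e -> exists N : nat, forall m n : nat,
        (N <= m)%N -> (N <= n)%N -> cs_norm (u m - u n) < e) ->
    exists l : cs_car, forall e : R, 0 < e -> exists N : nat,
        forall n : nat, (N <= n)%N -> cs_norm (u n - l) < e
}.

Definition mxstar (R : realType) (m : nat) (a : 'M[R[i]]_m) : 'M[R[i]]_m :=
  (map_mx conjc a)^T.

Definition mx_star_hom (R : realType) (m : nat) (B : CstarAlg R)
    (f : 'M[R[i]]_m -> B) : Prop :=
  [/\ forall a b, f (a + b) = f a + f b,
      forall (c : R[i]) a, f (c *: a) = c *: f a,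
      forall a b, f (a * b) = cs_mul (f a) (f b)
    & forall a, f (mxstar a) = cs_star (f a)].

(* B (x) C[0,1] is realized as C([0,1], B), the continuous B-valued
   functions on [0,1] with pointwise operations and sup norm.  A map
   sigma : M_n -> C([0,1],B) is represented as sigma : M_n -> R -> B,
   only values on [0,1] being relevant.  It is a *-homomorphism iff each
   sigma a is continuous on [0,1] and each evaluation is a *-hom. *)
Definition in01 (R : realType) (t : R) : Prop := 0 <= t <= 1.

Definition cont01 (R : realType) (B : CstarAlg R) (g : R -> B) : Prop :=
  forall t, in01 t -> forall e : R, 0 < e -> exists2 d : R, 0 < d &
    forall s, in01 s -> `|s - t| < d -> cs_norm (g s - g t) < e.

Definition mx_path_hom (R : realType) (m : nat) (B : CstarAlg R)
    (sigma : 'M[R[i]]_m -> R -> B) : Prop :=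
  (forall a, cont01 (sigma a)) /\
  (forall t, in01 t -> mx_star_hom (fun a => sigma a t)).

(* M_n (x) M_n is realized as M_{n*n} (Kronecker product), with
   p0 a = a (x) 1 and p1 a = 1 (x) a. *)
Definition p0 (R : realType) (n : nat) (a : 'M[R[i]]_n) : 'M[R[i]]_(n * n) :=
  a *t (1%:M : 'M[R[i]]_n).
Definition p1 (R : realType) (n : nat) (a : 'M[R[i]]_n) : 'M[R[i]]_(n * n) :=
  (1%:M : 'M[R[i]]_n) *t a.

(* TC_witness R n k : there is a "k-piece" datum as in the definition of
   TC(M_n): C*-algebras B_i, surjective *-homs q_i : M_n(x)M_n -> B_i with
   jointly trivial kernel, and *-homs sigma_i : M_n -> B_i (x) C[0,1] with
   ev_0 o sigma_i = q_i o p0 and ev_1 o sigma_i = q_i o p1. *)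
Definition TC_witness (R : realType) (n k : nat) : Prop :=
  exists (B : 'I_k -> CstarAlg R)
         (q : forall i : 'I_k, 'M[R[i]]_(n * n) -> B i)
         (sigma : forall i : 'I_k, 'M[R[i]]_n -> R -> B i),
    [/\ forall i, mx_star_hom (q i),
        forall i, forall y : B i, exists x, q i x = y,
        forall x, (forall i, q i x = 0) -> x = 0,
        forall i, mx_path_hom (sigma i)
      & forall i a, sigma i a 0 = q i (p0 a) /\ sigma i a 1 = q i (p1 a)].

Definition TC_eq (R : realType) (n k : nat) : Prop :=
  TC_witness R n k /\ forall j : nat, (j < k)%N -> ~ TC_witness R n j.

(* M_(n*n) is a C*-algebra for the operator norm, and the single piece
   B_1 = M_(n*n), q_1 = id suffices.  The flip F, the permutation matrix
   exchanging the two tensor factors, is a self-adjoint unitary with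
   F (a (x) 1) F = 1 (x) a.  So U_t = cos th + i sin th F, th going from 0 to pi/2,
   is a Lipschitz path of unitaries from 1 to iF, and
   sigma_t(a) = U_t (a (x) 1) U_t^* is a path of *-homomorphisms from p_0 to p_1.
   Zero pieces are impossible: an empty family of kernels intersects in M_(n*n) <> 0. *)

From HB Require Import structures.
From mathcomp Require Import all_boot all_order all_algebra.
From mathcomp Require Import classical_sets reals complex mxtens.
From mathcomp Require Import ring lra.
From mathcomp Require Import fingroup perm.
Set Implicit Arguments. Unset Strict Implicit. Unset Printing Implicit Defensive.
Import Order.TTheory GRing.Theory Num.Theory Normc.
Local Open Scope ring_scope.
Local Open Scope complex_scope.

Section ComplexVectors.
Variable R : realType.
Local Notation C := R[i].
Local Notation Re := (@complex.Re R).
Local Notation Im := (@complex.Im R).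
Variable m : nat.
Implicit Types (z : C) (u v w : 'cV[C]_m).

Definition normc2 z : R := Re z ^+ 2 + Im z ^+ 2.
Definition cvdot w u : C := \sum_i conjc (w i 0) * u i 0.
Definition cvnorm2 v : R := \sum_i normc2 (v i 0).
Definition cvnorm v : R := Num.sqrt (cvnorm2 v).

Lemma normc2_ge0 z : 0 <= normc2 z.
Proof. by rewrite addr_ge0 // sqr_ge0. Qed.

Lemma normc2_eq0 z : normc2 z = 0 -> z = 0.
Proof.
case: z => a b /eqP; rewrite /normc2 paddr_eq0 ?sqr_ge0 // !sqrf_eq0 /=.
by case/andP => /eqP -> /eqP ->.
Qed.

Lemma normc2M z1 z2 : normc2 (z1 * z2) = normc2 z1 * normc2 z2.
Proof. by case: z1 => a b; case: z2 => c d; rewrite /normc2 /=; ring. Qed.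

Lemma normc2_real (r : R) : normc2 r%:C = r ^+ 2.
Proof. by rewrite /normc2 /= expr0n addr0. Qed.

Lemma normcE2 z : normc z = Num.sqrt (normc2 z).
Proof. by case: z. Qed.

Lemma normc_ge0 z : 0 <= normc z.
Proof. by rewrite normcE2 sqrtr_ge0. Qed.

Lemma normc_conj z : normc (conjc z) = normc z.
Proof. by case: z => a b; rewrite /= sqrrN. Qed.

Lemma normc_real (r : R) : normc r%:C = `|r|.
Proof. by rewrite normcE2 normc2_real sqrtr_sqr. Qed.

Lemma Re_le_normc z : Re z <= normc z.
Proof.
case: z => a b /=; apply: le_trans (ler_norm a) _.
by rewrite -sqrtr_sqr ler_sqrt ?lerDl ?addr_ge0 ?sqr_ge0.
Qed.

Lemma normc_le_ReIm z : normc z <= `|Re z| + `|Im z|.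
Proof.
case: z => a b /=.
rewrite -[X in _ <= X]ger0_norm ?addr_ge0 // -sqrtr_sqr ler_sqrt ?sqr_ge0 //.
rewrite sqrrD !real_normK ?num_real // mulr2n.
have := mulr_ge0 (normr_ge0 a) (normr_ge0 b); lra.
Qed.

Lemma Re_conjM z1 z2 : Re (conjc z1 * z2) = Re z1 * Re z2 + Im z1 * Im z2.
Proof. by case: z1 => a b; case: z2 => c d /=; ring. Qed.

Lemma Re_realM (r : R) z : Re (r%:C * z) = r * Re z.
Proof. by case: z => a b /=; ring. Qed.

Lemma cvnorm2_ge0 v : 0 <= cvnorm2 v.
Proof. by apply: sumr_ge0 => i _; apply: normc2_ge0. Qed.

Lemma cvnorm2_eq0 v : cvnorm2 v = 0 -> v = 0.
Proof.
move=> /eqP; rewrite psumr_eq0 => [/allP v0|i _]; last exact: normc2_ge0.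
apply/matrixP => i j; rewrite [j]ord1 mxE; apply: normc2_eq0.
by apply/eqP/v0; rewrite mem_index_enum.
Qed.

Lemma cvnorm2Z (c : C) v : cvnorm2 (c *: v) = normc2 c * cvnorm2 v.
Proof. by rewrite /cvnorm2 mulr_sumr; apply: eq_bigr => i _; rewrite mxE normc2M. Qed.

Lemma normc2_le_cvnorm2 v i : normc2 (v i 0) <= cvnorm2 v.
Proof. by rewrite /cvnorm2 (bigD1 i) //= lerDl sumr_ge0 // => k _; apply: normc2_ge0. Qed.

Lemma cvnorm_ge0 v : 0 <= cvnorm v.
Proof. exact: sqrtr_ge0. Qed.

Lemma sqr_cvnorm v : cvnorm v ^+ 2 = cvnorm2 v.
Proof. by rewrite sqr_sqrtr // cvnorm2_ge0. Qed.

Lemma cvnorm_eq0 v : cvnorm v = 0 -> v = 0.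
Proof.
move=> /eqP; rewrite sqrtr_eq0 => v0; apply: cvnorm2_eq0.
by apply/eqP; rewrite eq_le v0 cvnorm2_ge0.
Qed.

Lemma cvnormZ (c : C) v : cvnorm (c *: v) = normc c * cvnorm v.
Proof. by rewrite /cvnorm cvnorm2Z sqrtrM ?normcE2 // normc2_ge0. Qed.

Lemma cvnorm_le1 v : cvnorm2 v <= 1 -> cvnorm v <= 1.
Proof. by move=> v1; rewrite /cvnorm -sqrtr1 ler_sqrt. Qed.

Lemma Re_cvdot w u :
  Re (cvdot w u) = \sum_i (Re (w i 0) * Re (u i 0) + Im (w i 0) * Im (u i 0)).
Proof. by rewrite raddf_sum; apply: eq_bigr => i _; apply: Re_conjM. Qed.

Lemma Re_cvdotvv v : Re (cvdot v v) = cvnorm2 v.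
Proof. by rewrite Re_cvdot; apply: eq_bigr => i _; rewrite /normc2 !expr2. Qed.

Lemma Re_cvdotC w u : Re (cvdot w u) = Re (cvdot u w).
Proof. by rewrite !Re_cvdot; apply: eq_bigr => i _; rewrite mulrC [Im _ * _]mulrC. Qed.

Lemma cvdotDr w u1 u2 : cvdot w (u1 + u2) = cvdot w u1 + cvdot w u2.
Proof. by rewrite -big_split; apply: eq_bigr => i _; rewrite mxE mulrDr. Qed.

Lemma cvdotZr w (c : C) u : cvdot w (c *: u) = c * cvdot w u.
Proof. by rewrite mulr_sumr; apply: eq_bigr => i _; rewrite mxE mulrCA. Qed.

Lemma cvdotZl (c : C) w u : cvdot (c *: w) u = conjc c * cvdot w u.
Proof. by rewrite mulr_sumr; apply: eq_bigr => i _; rewrite mxE rmorphM mulrA. Qed.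

Lemma Re_cvdotZ (a b : R) w u :
  Re (cvdot (a%:C *: w) (b%:C *: u)) = a * b * Re (cvdot w u).
Proof. by rewrite cvdotZl cvdotZr conjc_real mulrA -rmorphM Re_realM. Qed.

Lemma Re_cvdot_le_mean w u : 2 * Re (cvdot w u) <= cvnorm2 w + cvnorm2 u.
Proof.
rewrite Re_cvdot mulr_sumr -big_split; apply: ler_sum => i _ /=.
rewrite /normc2.
have := sqr_ge0 (Re (w i 0) - Re (u i 0)); have := sqr_ge0 (Im (w i 0) - Im (u i 0)).
rewrite !sqrrB; lra.
Qed.

Lemma le_cvnorm_homogeneous (f : 'cV[C]_m -> 'cV[C]_m -> R) (k : R) :
  0 <= k ->
  (forall (a b : R) v w, f (a%:C *: v) (b%:C *: w) = a * b * f v w) ->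
  (forall v w, cvnorm2 v <= 1 -> cvnorm2 w <= 1 -> f v w <= k) ->
  forall v w, f v w <= k * cvnorm v * cvnorm w.
Proof.
move=> k0 fZ fk v w.
have f0l w' : f 0 w' = 0.
  by have := fZ 0 1 0 w'; rewrite rmorph0 rmorph1 scale0r scale1r !mul0r.
have f0r v' : f v' 0 = 0.
  by have := fZ 1 0 v' 0; rewrite rmorph0 rmorph1 scale0r scale1r mulr0 mul0r.
have [/cvnorm_eq0 v0|vn0] := eqVneq (cvnorm v) 0.
  by rewrite v0 f0l !mulr_ge0 ?cvnorm_ge0.
have [/cvnorm_eq0 w0|wn0] := eqVneq (cvnorm w) 0.
  by rewrite w0 f0r !mulr_ge0 ?cvnorm_ge0.
have unit x : cvnorm x != 0 -> cvnorm2 ((cvnorm x)^-1%:C *: x) <= 1.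
  move=> x0; rewrite cvnorm2Z normc2_real -sqr_cvnorm exprVn mulVf //.
  by rewrite expf_neq0.
have := fk _ _ (unit _ vn0) (unit _ wn0); rewrite fZ -invfM.
have vw0 : 0 < cvnorm v * cvnorm w by rewrite mulr_gt0 // lt_def ?vn0 ?wn0 cvnorm_ge0.
by rewrite mulrC ler_pdivrMr // mulrA.
Qed.

Lemma Re_cvdot_le w u : Re (cvdot w u) <= cvnorm w * cvnorm u.
Proof.
rewrite -[cvnorm w]mul1r.
apply: (@le_cvnorm_homogeneous (fun w u => Re (cvdot w u))) => // [a b v v'|v v' v1 v'1].
  exact: Re_cvdotZ.
have := Re_cvdot_le_mean v v'; lra.
Qed.

End ComplexVectors.

Section MatrixStar.
Variable R : realType.
Local Notation C := R[i].
Variable m : nat.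
Implicit Types X Y : 'M[C]_m.

Lemma mxstarK X : mxstar (mxstar X) = X.
Proof. by apply/matrixP => i j; rewrite !mxE conjcK. Qed.

Lemma mxstarD X Y : mxstar (X + Y) = mxstar X + mxstar Y.
Proof. by apply/matrixP => i j; rewrite !mxE rmorphD. Qed.

Lemma mxstarB X Y : mxstar (X - Y) = mxstar X - mxstar Y.
Proof. by apply/matrixP => i j; rewrite !mxE rmorphB. Qed.

Lemma mxstarZ (c : C) X : mxstar (c *: X) = conjc c *: mxstar X.
Proof. by apply/matrixP => i j; rewrite !mxE rmorphM. Qed.

Lemma mxstarM X Y : mxstar (X *m Y) = mxstar Y *m mxstar X.
Proof.
apply/matrixP => i j; rewrite !mxE rmorph_sum; apply: eq_bigr => k _.
by rewrite !mxE rmorphM mulrC.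
Qed.

Lemma mxstar1 : mxstar (1%:M : 'M[C]_m) = 1%:M.
Proof. by rewrite /mxstar map_mx1 trmx1. Qed.

Lemma cvdot_mxstar (w v : 'cV[C]_m) X : cvdot w (X *m v) = cvdot (mxstar X *m w) v.
Proof.
rewrite /cvdot; under eq_bigr do rewrite mxE mulr_sumr.
under [RHS]eq_bigr do rewrite mxE rmorph_sum mulr_suml.
rewrite exchange_big /=; apply: eq_bigr => i _; apply: eq_bigr => j _.
by rewrite !mxE rmorphM /= conjcK mulrA [_ * conjc (w j 0)]mulrC.
Qed.

End MatrixStar.

Section OperatorNorm.
Variable R : realType.
Local Notation C := R[i].
Local Notation Re := (@complex.Re R).
Local Notation Im := (@complex.Im R).
Variable m : nat.
Implicit Types X Y : 'M[C]_m.
Implicit Types v w : 'cV[C]_m.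

Definition opnorm_values X : set R :=
  [set r | exists v w, [/\ cvnorm2 v <= 1, cvnorm2 w <= 1 & r = Re (cvdot w (X *m v))]].

Definition opnorm X : R := sup (opnorm_values X).

Definition mx_l1norm X : R := \sum_i \sum_j (`|Re (X i j)| + `|Im (X i j)|).

Lemma opnorm_values0 X : opnorm_values X 0.
Proof.
have cvnorm2_0 : cvnorm2 (0 : 'cV[C]_m) = 0.
  by rewrite /cvnorm2 big1 // => i _; rewrite mxE normc2_real expr0n.
exists 0, 0; rewrite cvnorm2_0 ler01; split => //.
by rewrite /cvdot big1 // => i _; rewrite mxE rmorph0 mul0r.
Qed.

Lemma opnorm_values_le_l1 X r : opnorm_values X r -> r <= mx_l1norm X.
Proof.
case=> v [w [v1 w1 ->]].
rewrite raddf_sum; apply: ler_sum => i _.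
rewrite mxE mulr_sumr raddf_sum; apply: ler_sum => j _.
apply: le_trans (Re_le_normc _) _; rewrite mulrA !normcM normc_conj.
apply: le_trans (normc_le_ReIm (X i j)).
have normc_le1 (z : C) : normc2 z <= 1 -> normc z <= 1.
  by move=> z1; rewrite normcE2 -sqrtr1 ler_sqrt.
have wi1 := normc_le1 _ (le_trans (normc2_le_cvnorm2 w i) w1).
have vj1 := normc_le1 _ (le_trans (normc2_le_cvnorm2 v j) v1).
have Xij0 : 0 <= normc (X i j) by rewrite normc_ge0.
rewrite -mulrA; apply: le_trans (ler_piMl _ wi1) _.
  by rewrite mulr_ge0 // normc_ge0.
by rewrite ler_piMr.
Qed.

Lemma has_sup_opnorm_values X : has_sup (opnorm_values X).
Proof.
split; first by exists 0; apply: opnorm_values0.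
by exists (mx_l1norm X) => r; apply: opnorm_values_le_l1.
Qed.

Lemma opnorm_ub X v w :
  cvnorm2 v <= 1 -> cvnorm2 w <= 1 -> Re (cvdot w (X *m v)) <= opnorm X.
Proof. by move=> v1 w1; apply: sup_upper_bound (has_sup_opnorm_values X) _ _; exists v, w. Qed.

Lemma opnorm_le X c :
  (forall v w, cvnorm2 v <= 1 -> cvnorm2 w <= 1 -> Re (cvdot w (X *m v)) <= c) ->
  opnorm X <= c.
Proof.
move=> Xc; apply: ge_sup; first by exists 0; apply: opnorm_values0.
by move=> r [v [w [v1 w1 ->]]]; apply: Xc.
Qed.

Lemma opnorm_ge0 X : 0 <= opnorm X.
Proof. exact: sup_upper_bound (has_sup_opnorm_values X) _ (opnorm_values0 X). Qed.

Lemma opnorm_le_l1 X : opnorm X <= mx_l1norm X.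
Proof. by apply: opnorm_le => v w v1 w1; apply: opnorm_values_le_l1; exists v, w. Qed.

Lemma Re_cvdot_opnorm X v w :
  Re (cvdot w (X *m v)) <= opnorm X * cvnorm v * cvnorm w.
Proof.
apply: (@le_cvnorm_homogeneous _ _ (fun v w => Re (cvdot w (X *m v)))) => //.
- exact: opnorm_ge0.
- by move=> a b v' w'; rewrite -scalemxAr Re_cvdotZ [b * a]mulrC.
- exact: opnorm_ub.
Qed.

Lemma cvnorm_mulmx X v : cvnorm (X *m v) <= opnorm X * cvnorm v.
Proof.
have [Xv0|Xv_neq0] := eqVneq (cvnorm (X *m v)) 0.
  by rewrite Xv0 mulr_ge0 ?opnorm_ge0 ?cvnorm_ge0.
have := Re_cvdot_opnorm X v (X *m v).
rewrite Re_cvdotvv -sqr_cvnorm expr2 ler_pM2r //.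
by rewrite lt_def Xv_neq0 cvnorm_ge0.
Qed.

Lemma opnormD X Y : opnorm (X + Y) <= opnorm X + opnorm Y.
Proof.
apply: opnorm_le => v w v1 w1.
by rewrite mulmxDl cvdotDr raddfD lerD // opnorm_ub.
Qed.

Lemma opnormZ_le (c : C) X : opnorm (c *: X) <= normc c * opnorm X.
Proof.
apply: opnorm_le => v w v1 w1.
rewrite -scalemxAl cvdotZr -[c]conjcK -cvdotZl.
apply: le_trans (Re_cvdot_opnorm _ _ _) _.
rewrite cvnormZ conjcK normc_conj.
apply: le_trans (_ : _ <= opnorm X * normc c) _; last by rewrite mulrC.
apply: ler_pM; rewrite ?mulr_ge0 ?opnorm_ge0 ?cvnorm_ge0 ?normc_ge0 //;
  by apply: ler_piMr; rewrite ?opnorm_ge0 ?normc_ge0 ?cvnorm_le1.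
Qed.

Lemma opnormZ (c : C) X : opnorm (c *: X) = normc c * opnorm X.
Proof.
apply/eqP; rewrite eq_le opnormZ_le /=.
have [->|c0] := eqVneq c 0; first by rewrite normc0 mul0r opnorm_ge0.
have nc0 : 0 < normc c.
  by rewrite lt_def normc_ge0 andbT; apply: contra c0 => /eqP/eq0_normc ->.
have := opnormZ_le c^-1 (c *: X); rewrite scalerA mulVf // scale1r normcV.
by rewrite ler_pdivlMl.
Qed.

Lemma opnormM X Y : opnorm (X *m Y) <= opnorm X * opnorm Y.
Proof.
apply: opnorm_le => v w v1 w1.
rewrite -mulmxA; apply: le_trans (Re_cvdot_opnorm _ _ _) _.
apply: le_trans (ler_piMr _ (cvnorm_le1 w1)) _.
  by rewrite mulr_ge0 ?opnorm_ge0 ?cvnorm_ge0.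
apply: ler_wpM2l; first exact: opnorm_ge0.
apply: le_trans (cvnorm_mulmx Y v) _.
by rewrite ler_piMr ?opnorm_ge0 ?cvnorm_le1.
Qed.

Lemma opnorm_mxstar X : opnorm (mxstar X) = opnorm X.
Proof.
have le_star Y : opnorm (mxstar Y) <= opnorm Y.
  apply: opnorm_le => v w v1 w1.
  by rewrite cvdot_mxstar mxstarK Re_cvdotC opnorm_ub.
by apply/eqP; rewrite eq_le le_star -{1}(mxstarK X) le_star.
Qed.

Lemma opnorm_eq0 X : opnorm X = 0 -> X = 0.
Proof.
move=> X0; apply/matrixP => i j.
have := cvnorm_mulmx X (delta_mx j 0); rewrite X0 mul0r => Xj0.
have /cvnorm_eq0 : cvnorm (X *m delta_mx j 0) = 0 by apply/eqP; rewrite eq_le Xj0 cvnorm_ge0.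
by rewrite -colE => /matrixP /(_ i 0); rewrite !mxE.
Qed.

Lemma opnorm_mxstarM X : opnorm (mxstar X *m X) = opnorm X ^+ 2.
Proof.
apply/eqP; rewrite eq_le; apply/andP; split.
  by apply: le_trans (opnormM _ _) _; rewrite opnorm_mxstar expr2.
rewrite -ler_sqrt ?exprn_ge0 ?opnorm_ge0 // sqrtr_sqr ger0_norm ?opnorm_ge0 //.
apply: opnorm_le => v w v1 w1.
apply: le_trans (Re_cvdot_le _ _) _.
apply: le_trans (ler_piMl (cvnorm_ge0 _) (cvnorm_le1 w1)) _.
rewrite /cvnorm ler_sqrt ?opnorm_ge0 //.
by rewrite -Re_cvdotvv cvdot_mxstar mulmxA Re_cvdotC opnorm_ub.
Qed.

Lemma opnorm1_le1 : opnorm (1%:M : 'M[C]_m) <= 1.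
Proof.
apply: opnorm_le => v w v1 w1; rewrite mul1mx.
apply: le_trans (Re_cvdot_le _ _) _.
by rewrite -[1]mulr1; apply: ler_pM; rewrite ?cvnorm_ge0 ?cvnorm_le1.
Qed.

Lemma opnorm_unitary X : mxstar X *m X = 1%:M -> opnorm X <= 1.
Proof.
move=> XU; rewrite -(@expr_le1 _ 2) ?opnorm_ge0 //.
by rewrite -opnorm_mxstarM XU opnorm1_le1.
Qed.

Lemma opnorm_conjB (U V X : 'M[C]_m) : opnorm U <= 1 -> opnorm V <= 1 ->
  opnorm (U *m X *m mxstar U - V *m X *m mxstar V) <= 2 * opnorm (U - V) * opnorm X.
Proof.
move=> U1 V1.
have -> : U *m X *m mxstar U - V *m X *m mxstar V =
    (U - V) *m X *m mxstar U + V *m X *m mxstar (U - V).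
  by rewrite mxstarB mulmxBr !mulmxBl addrA subrK.
have UV0 := opnorm_ge0 (U - V).
have left : opnorm ((U - V) *m X *m mxstar U) <= opnorm (U - V) * opnorm X.
  apply: le_trans (opnormM _ _) _; rewrite opnorm_mxstar.
  by apply: le_trans (ler_piMr (opnorm_ge0 _) U1) _; apply: opnormM.
have right : opnorm (V *m X *m mxstar (U - V)) <= opnorm X * opnorm (U - V).
  apply: le_trans (opnormM _ _) _; rewrite opnorm_mxstar.
  apply: (ler_wpM2r UV0); apply: le_trans (opnormM _ _) _.
  exact: ler_piMl (opnorm_ge0 _) V1.
apply: le_trans (opnormD _ _) _; apply: le_trans (lerD left right) _.
by rewrite [opnorm X * _]mulrC -mulrA mulr_natl mulr2n.
Qed.

End OperatorNorm.

Section Completeness.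
Variable R : realType.
Local Notation C := R[i].
Local Notation Re := (@complex.Re R).
Local Notation Im := (@complex.Im R).

Definition cauchy_in (T : zmodType) (nm : T -> R) (u : nat -> T) : Prop :=
  forall e : R, 0 < e -> exists N : nat,
    forall a b : nat, (N <= a)%N -> (N <= b)%N -> nm (u a - u b) < e.

Definition converges_in (T : zmodType) (nm : T -> R) (u : nat -> T) (l : T) : Prop :=
  forall e : R, 0 < e -> exists N : nat, forall n : nat, (N <= n)%N -> nm (u n - l) < e.

(* The limit is the supremum of the eventual lower bounds of the sequence. *)
Lemma cauchy_in_real_converges (x : nat -> R) :
  cauchy_in Num.norm x -> exists l, converges_in Num.norm x l.
Proof.
move=> xC.
pose S : set R := fun y => exists N : nat, forall n : nat, (N <= n)%N -> y <= x n.
have lbS e N : (forall a b, (N <= a)%N -> (N <= b)%N -> `|x a - x b| < e) -> S (x N - e).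
  move=> xN; exists N => n Nn; have := xN n N Nn (leqnn _).
  by rewrite ltr_norml => /andP[]; lra.
have ubS e N : (forall a b, (N <= a)%N -> (N <= b)%N -> `|x a - x b| < e) ->
    forall y, S y -> y <= x N + e.
  move=> xN y [N' yN']; have := yN' (maxn N' N) (leq_maxl _ _).
  have := xN (maxn N' N) N (leq_maxr _ _) (leqnn _).
  by rewrite ltr_norml => /andP[]; lra.
have [N1 xN1] := xC 1 ltr01.
have S0 : S (x N1 - 1) by apply: lbS.
have supS : has_sup S by split; [exists (x N1 - 1) | exists (x N1 + 1) => y; apply: ubS].
exists (sup S) => e e0.
have [N xN] := xC _ (divr_gt0 e0 (ltr0Sn _ 1)).
have lo : x N - e / 2 <= sup S by apply: sup_upper_bound supS _ (lbS _ _ xN).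
have hi : sup S <= x N + e / 2 by apply: ge_sup; [exists (x N1 - 1) | apply: ubS].
exists N => n Nn; have := xN n N Nn (leqnn _).
rewrite !ltr_norml => /andP[? ?]; apply/andP; split; lra.
Qed.

Lemma cauchy_in_dominated (T U : zmodType) (nmT : T -> R) (nmU : U -> R)
    (f : T -> U) (u : nat -> T) :
  (forall x y, f (x - y) = f x - f y) -> (forall x, nmU (f x) <= nmT x) ->
  cauchy_in nmT u -> cauchy_in nmU (f \o u).
Proof.
move=> fB f_le uC e e0; have [N uN] := uC e e0.
by exists N => a b Na Nb; rewrite /= -fB (le_lt_trans (f_le _)) ?uN.
Qed.

Variable m : nat.
Implicit Types X : 'M[C]_m.

Lemma cvdot_delta_mx (i : 'I_m) (u : 'cV[C]_m) : cvdot (delta_mx i 0) u = u i 0.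
Proof.
rewrite /cvdot (bigD1 i) //= big1 ?addr0 => [|k ki]; first by rewrite mxE conjc_nat !eqxx mul1r.
by rewrite mxE conjc_nat (negbTE ki) mul0r.
Qed.

Lemma cvnorm2_delta_mx (i : 'I_m) : cvnorm2 (delta_mx i 0 : 'cV[C]_m) = 1.
Proof.
rewrite /cvnorm2 (bigD1 i) //= big1 ?addr0 => [|k ki]; first by rewrite mxE !eqxx normc2_real expr1n.
by rewrite mxE (negbTE ki) normc2_real expr0n.
Qed.

Lemma Re_conjM_entry_le X (c : C) i j :
  normc2 c <= 1 -> Re (conjc c * X i j) <= opnorm X.
Proof.
move=> c1; have -> : X i j = (X *m (delta_mx j 0 : 'cV_m)) i 0 by rewrite -colE mxE.
rewrite -cvdot_delta_mx -cvdotZl.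
by apply: opnorm_ub; rewrite ?cvnorm2Z cvnorm2_delta_mx ?mulr1.
Qed.

Lemma Re_entry_le X i j : `|Re (X i j)| <= opnorm X.
Proof.
have := Re_conjM_entry_le X (c := 1) i j; have := Re_conjM_entry_le X (c := -1) i j.
rewrite !Re_conjM /normc2 /= !(expr0n, expr1n, sqrrN, oppr0, addr0, mul0r, mul1r, mulN1r, lexx) /=.
by move=> /(_ isT) XN /(_ isT) XP; rewrite ler_norml XP lerNl XN.
Qed.

Lemma Im_entry_le X i j : `|Im (X i j)| <= opnorm X.
Proof.
have := Re_conjM_entry_le X (c := 'i) i j; have := Re_conjM_entry_le X (c := -'i) i j.
rewrite !Re_conjM /normc2 /= !(expr0n, expr1n, sqrrN, oppr0, add0r, mul0r, mul1r, mulN1r, lexx) /=.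
by move=> /(_ isT) XN /(_ isT) XP; rewrite ler_norml XP lerNl XN.
Qed.

Lemma converges_in_opnorm_entrywise (u : nat -> 'M[C]_m) (L : 'M[C]_m) :
  (forall i j, converges_in Num.norm (fun n => Re (u n i j)) (Re (L i j)) /\
               converges_in Num.norm (fun n => Im (u n i j)) (Im (L i j))) ->
  converges_in (@opnorm R m) u L.
Proof.
move=> uL e e0.
pose K : R := (m * m)%:R; have K0 : 0 <= K by rewrite ler0n.
pose e' := e / (2 * K + 1).
have e'0 : 0 < e' by rewrite divr_gt0 //; lra.
have entry_close (p : 'I_m * 'I_m) : exists N : nat, forall n, (N <= n)%N ->
    `|Re (u n p.1 p.2) - Re (L p.1 p.2)| + `|Im (u n p.1 p.2) - Im (L p.1 p.2)| <= e' + e'.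
  have [[N1 uN1] [N2 uN2]] := ((uL p.1 p.2).1 e' e'0, (uL p.1 p.2).2 e' e'0).
  exists (maxn N1 N2) => n; rewrite geq_max => /andP[N1n N2n].
  by rewrite lerD // ltW ?uN1 ?uN2.
have [N uN] := fin_all_exists entry_close.
exists (\max_p N p) => n n_ge; apply: le_lt_trans (opnorm_le_l1 _) _.
apply: le_lt_trans (_ : _ <= \sum_(i < m) \sum_(j < m) (e' + e')) _.
  apply: ler_sum => i _; apply: ler_sum => j _; rewrite !mxE !raddfB.
  exact: uN (leq_trans (leq_bigmax (i, j)) n_ge).
rewrite !sumr_const !card_ord -mulrnA -mulr_natr -/K.
have -> : (e' + e') * K = e - e' by rewrite /e'; field; lra.
by rewrite ltrBlDr ltrDl.
Qed.

Lemma opnorm_complete (u : nat -> 'M[C]_m) :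
  cauchy_in (@opnorm R m) u -> exists L, converges_in (@opnorm R m) u L.
Proof.
move=> uC.
have entry_limit (p : 'I_m * 'I_m) : exists z : C,
    converges_in Num.norm (fun n => Re (u n p.1 p.2)) (Re z) /\
    converges_in Num.norm (fun n => Im (u n p.1 p.2)) (Im z).
  have entryB (F : C -> R) : (forall z w, F (z - w) = F z - F w) ->
      forall X Y : 'M[C]_m, F ((X - Y) p.1 p.2) = F (X p.1 p.2) - F (Y p.1 p.2).
    by move=> FB X Y; rewrite !mxE FB.
  have [a ua] := cauchy_in_real_converges (cauchy_in_dominated
    (f := fun X => Re (X p.1 p.2)) (entryB _ (raddfB _)) (fun X => Re_entry_le X p.1 p.2) uC).
  have [b ub] := cauchy_in_real_converges (cauchy_in_dominated
    (f := fun X => Im (X p.1 p.2)) (entryB _ (raddfB _)) (fun X => Im_entry_le X p.1 p.2) uC).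
  by exists (a +i* b).
have [z uz] := fin_all_exists entry_limit.
exists (\matrix_(i, j) z (i, j)); apply: converges_in_opnorm_entrywise => i j.
by rewrite mxE; exact: (uz (i, j)).
Qed.

End Completeness.

Lemma opnormZ_complex (R : realType) N (c : R[i]) (X : 'M[R[i]]_N) :
  (opnorm (c *: X))%:C = `|c| * (opnorm X)%:C.
Proof. by rewrite opnormZ rmorphM normc_def normcE2. Qed.

Definition matrix_cstar (R : realType) (N : nat) : CstarAlg R :=
  @Build_CstarAlg R 'M[R[i]]_N (@mulmx _ N N N) (@mxstar R N) (@opnorm R N)
    (@mulmxA _ N N N N) (@mulmxDl _ N N N) (@mulmxDr _ N N N)
    (fun c X Y => esym (scalemxAl c X Y)) (fun c X Y => esym (scalemxAr c X Y))
    (@mxstarK R N) (@mxstarD R N) (@mxstarZ R N) (@mxstarM R N)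
    (@opnorm_ge0 R N) (@opnorm_eq0 R N) (@opnormD R N) (@opnormZ_complex R N)
    (@opnormM R N) (@opnorm_mxstarM R N) (@opnorm_complete R N).

Lemma lipschitz_cont01 (R : realType) (B : CstarAlg R) (g : R -> B) (k : R) : 0 <= k ->
  (forall s t, in01 s -> in01 t -> cs_norm (g s - g t) <= k * `|s - t|) -> cont01 g.
Proof.
move=> k0 g_lip t t01 e e0.
have k1 : 0 < k + 1 by lra.
exists (e / (k + 1)) => [|s s01 st]; first by rewrite divr_gt0.
apply: le_lt_trans (g_lip s t s01 t01) _.
apply: le_lt_trans (ler_wpM2l k0 (ltW st)) _.
by rewrite mulrA ltr_pdivrMr // mulrDr mulr1 mulrC ltrDl.
Qed.

Section Flip.
Variable R : realType.
Local Notation C := R[i].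
Variable n : nat.

Definition swap_index (k : 'I_(n * n)) : 'I_(n * n) :=
  mxtens_index ((mxtens_unindex k).2, (mxtens_unindex k).1).

Lemma swap_indexK : involutive swap_index.
Proof.
move=> k; rewrite /swap_index mxtens_indexK /= -[RHS]mxtens_unindexK.
by congr mxtens_index; case: (mxtens_unindex k).
Qed.

Lemma swap_index_pair (i j : 'I_n) : swap_index (mxtens_index (i, j)) = mxtens_index (j, i).
Proof. by rewrite /swap_index mxtens_indexK. Qed.

Definition swap_perm : 'S_(n * n) := perm (can_inj swap_indexK).

Lemma swap_permV : (swap_perm^-1)%g = swap_perm.
Proof.
apply/eqP; rewrite eq_invg_mul; apply/eqP/permP => k.
by rewrite permM !permE /= swap_indexK.
Qed.

Definition flip_mx : 'M[C]_(n * n) := perm_mx swap_perm.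

Lemma flip_mx_star : mxstar flip_mx = flip_mx.
Proof. by rewrite /mxstar map_perm_mx tr_perm_mx swap_permV. Qed.

Lemma flip_mxK : flip_mx *m flip_mx = 1%:M.
Proof. by rewrite -{1}flip_mx_star /flip_mx /mxstar map_perm_mx tr_perm_mx -perm_mxM mulVg perm_mx1. Qed.

Lemma flip_p0_flip (a : 'M[C]_n) : flip_mx *m p0 a *m flip_mx = p1 a.
Proof.
have -> : flip_mx *m p0 a *m flip_mx = col_perm swap_perm (row_perm swap_perm (p0 a)).
  by rewrite col_permE swap_permV row_permE.
apply/matrixP => i j.
have -> : col_perm swap_perm (row_perm swap_perm (p0 a)) i j = p0 a (swap_index i) (swap_index j).
  by rewrite !mxE !permE.
case: (mxtens_indexP i) => i1 i2; case: (mxtens_indexP j) => j1 j2.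
by rewrite !swap_index_pair /p0 /p1 !tensmxE mulrC.
Qed.

End Flip.

Section StarHomomorphisms.
Variable R : realType.
Local Notation C := R[i].

Lemma mxstar_tens k l (A : 'M[C]_k) (B : 'M[C]_l) :
  mxstar (A *t B) = mxstar A *t mxstar B.
Proof. by rewrite /mxstar map_mxT trmx_tens. Qed.

Lemma p0_star_hom n : mx_star_hom (B := matrix_cstar R (n * n)) (@p0 R n).
Proof.
split=> [a b|c a|a b|a]; rewrite /p0.
- by apply/matrixP => i j; rewrite !mxE mulrDl.
- by apply/matrixP => i j; rewrite !mxE mulrA.
- by rewrite /= tensmx_mul mul1mx.
- by rewrite /= mxstar_tens mxstar1.
Qed.

Lemma conj_unitary_star_hom m N (f : 'M[C]_m -> 'M[C]_N) (U : 'M[C]_N) :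
  mxstar U *m U = 1%:M -> mx_star_hom (B := matrix_cstar R N) f ->
  mx_star_hom (B := matrix_cstar R N) (fun a => U *m f a *m mxstar U).
Proof.
move=> UU [fD fZ fM fS]; split=> [a b|c a|a b|a] /=.
- by rewrite fD mulmxDr mulmxDl.
- by rewrite fZ -scalemxAr -scalemxAl.
- by rewrite fM /= !mulmxA -[_ *m mxstar U *m U]mulmxA UU mulmx1.
- by rewrite fS /= !mxstarM mxstarK !mulmxA.
Qed.

End StarHomomorphisms.

Section CircleParametrization.
Variable R : realType.

(* [rcos t + i rsin t = (1 + i t) / (1 - i t)]: a rational parametrisation of the
   unit circle, running from 1 to i on [0, 1], which avoids trigonometry. *)
Definition rcos (t : R) : R := (1 - t ^+ 2) / (1 + t ^+ 2).
Definition rsin (t : R) : R := 2 * t / (1 + t ^+ 2).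

Lemma circle_den_gt0 (t : R) : 0 < 1 + t ^+ 2.
Proof. by rewrite ltr_pwDl // sqr_ge0. Qed.

Lemma rcos_rsin t : rcos t ^+ 2 + rsin t ^+ 2 = 1.
Proof. by rewrite /rcos /rsin; field; rewrite gt_eqF ?circle_den_gt0. Qed.

Lemma rcos0 : rcos 0 = 1.
Proof. by rewrite /rcos expr0n subr0 addr0 divr1. Qed.

Lemma rsin0 : rsin 0 = 0.
Proof. by rewrite /rsin mulr0 mul0r. Qed.

Lemma rcos1 : rcos 1 = 0.
Proof. by rewrite /rcos expr1n subrr mul0r. Qed.

Lemma rsin1 : rsin 1 = 1.
Proof. by rewrite /rsin expr1n mulr1 divff // pnatr_eq0. Qed.

Lemma norm_quot_le (x y d : R) : 0 < d -> `|y| <= d -> `|2 * x * y / d| <= 2 * `|x|.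
Proof.
move=> d0 yd; rewrite normrM normfV (gtr0_norm d0) ler_pdivrMr // !normrM.
by rewrite (ger0_norm (ler0n _ 2)) ler_wpM2l ?mulr_ge0.
Qed.

Lemma rcos_lipschitz s t : `|rcos s - rcos t| <= 2 * `|s - t|.
Proof.
have [ds dt] := (circle_den_gt0 s, circle_den_gt0 t).
have -> : rcos s - rcos t = 2 * (t - s) * (t + s) / ((1 + s ^+ 2) * (1 + t ^+ 2)).
  by rewrite /rcos; field; rewrite !gt_eqF.
rewrite distrC norm_quot_le ?mulr_gt0 // ler_norml.
have := sqr_ge0 (s - 1); have := sqr_ge0 (t - 1); have := sqr_ge0 (s + 1); have := sqr_ge0 (t + 1).
have := sqr_ge0 (s * t); rewrite !sqrrB !sqrrD exprMn; nra.
Qed.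

Lemma rsin_lipschitz s t : `|rsin s - rsin t| <= 2 * `|s - t|.
Proof.
have [ds dt] := (circle_den_gt0 s, circle_den_gt0 t).
have -> : rsin s - rsin t = 2 * (s - t) * (1 - s * t) / ((1 + s ^+ 2) * (1 + t ^+ 2)).
  by rewrite /rsin; field; rewrite !gt_eqF.
rewrite norm_quot_le ?mulr_gt0 // ler_norml.
have := sqr_ge0 (s - t); have := sqr_ge0 (s + t); have := sqr_ge0 (s * t).
rewrite !sqrrB !sqrrD exprMn; nra.
Qed.

End CircleParametrization.

Section UnitaryPath.
Variable R : realType.
Local Notation C := R[i].

Definition rot_mx N (F : 'M[C]_N) (x y : R) : 'M[C]_N := x%:C *: 1%:M + ('i * y%:C) *: F.

Lemma rot_mxB N (F : 'M[C]_N) x y x' y' :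
  rot_mx F x y - rot_mx F x' y' = rot_mx F (x - x') (y - y').
Proof. by rewrite /rot_mx opprD addrACA -!scalerBl -mulrBr !rmorphB. Qed.

Lemma rot_mx_unitary N (F : 'M[C]_N) x y :
  mxstar F = F -> F *m F = 1%:M -> x ^+ 2 + y ^+ 2 = 1 ->
  mxstar (rot_mx F x y) *m rot_mx F x y = 1%:M.
Proof.
move=> FS FF xy1.
rewrite /rot_mx mxstarD !mxstarZ mxstar1 FS conjc_real mulmxDl !mulmxDr.
rewrite -!scalemxAl -!scalemxAr !mul1mx !mulmx1 FF !scalerA.
rewrite [_ *: F + _ *: 1%:M]addrC addrACA -!scalerDl.
have -> : x%:C * ('i * y%:C) + conjc ('i * y%:C) * x%:C = 0.
  by apply/eqP; rewrite eq_complex /=; apply/andP; split; apply/eqP; ring.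
have -> : x%:C * x%:C + conjc ('i * y%:C) * ('i * y%:C) = 1.
  apply/eqP; rewrite eq_complex /=; apply/andP; split; apply/eqP; last by ring.
  by apply: etrans _ xy1; ring.
by rewrite scale1r scale0r addr0.
Qed.

Lemma opnorm_rot_mx N (F : 'M[C]_N) x y :
  mxstar F *m F = 1%:M -> opnorm (rot_mx F x y) <= `|x| + `|y|.
Proof.
move=> FU; apply: le_trans (opnormD _ _) _.
have normc_i : normc ('i : C) = 1 by rewrite normcE2 /normc2 /= expr0n expr1n add0r sqrtr1.
rewrite !opnormZ normcM normc_i mul1r !normc_real.
by apply: lerD; apply: ler_piMr; rewrite ?normr_ge0 ?opnorm1_le1 ?opnorm_unitary.
Qed.

Variable n : nat.

Lemma flip_unitary : mxstar (flip_mx R n) *m flip_mx R n = 1%:M.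
Proof. by rewrite flip_mx_star flip_mxK. Qed.

Definition flip_path (t : R) : 'M[C]_(n * n) := rot_mx (flip_mx R n) (rcos t) (rsin t).

Lemma flip_path_unitary t : mxstar (flip_path t) *m flip_path t = 1%:M.
Proof. by rewrite rot_mx_unitary ?flip_mx_star ?flip_mxK ?rcos_rsin. Qed.

Lemma opnorm_flip_pathB s t : opnorm (flip_path s - flip_path t) <= 4 * `|s - t|.
Proof.
rewrite rot_mxB; apply: le_trans (opnorm_rot_mx _ _ flip_unitary) _.
have := lerD (rcos_lipschitz s t) (rsin_lipschitz s t); lra.
Qed.

Definition flip_conj_path (a : 'M[C]_n) (t : R) : 'M[C]_(n * n) :=
  flip_path t *m p0 a *m mxstar (flip_path t).

Lemma flip_conj_path_star_hom t :
  mx_star_hom (B := matrix_cstar R (n * n)) (fun a => flip_conj_path a t).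
Proof. exact: conj_unitary_star_hom (flip_path_unitary t) (p0_star_hom R n). Qed.

Lemma flip_conj_path0 a : flip_conj_path a 0 = p0 a.
Proof.
rewrite /flip_conj_path /flip_path /rot_mx rcos0 rsin0 rmorph0 rmorph1 mulr0 scale0r addr0 scale1r.
by rewrite mxstar1 mul1mx mulmx1.
Qed.

Lemma flip_conj_path1 a : flip_conj_path a 1 = p1 a.
Proof.
rewrite /flip_conj_path /flip_path /rot_mx rcos1 rsin1 rmorph0 rmorph1 mulr1 scale0r add0r.
rewrite mxstarZ flip_mx_star -scalemxAr -!scalemxAl !scalerA.
have -> : conjc ('i : C) * 'i = 1.
  by apply/eqP; rewrite eq_complex /=; apply/andP; split; apply/eqP; ring.
by rewrite scale1r flip_p0_flip.
Qed.

Lemma flip_conj_path_cont a : cont01 (B := matrix_cstar R (n * n)) (flip_conj_path a).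
Proof.
apply: (@lipschitz_cont01 _ _ _ (8 * opnorm (p0 a))) => [|s t _ _].
  by rewrite mulr_ge0 ?opnorm_ge0.
apply: le_trans (opnorm_conjB _ _ _) _; rewrite ?opnorm_unitary ?flip_path_unitary //.
move: (opnorm_ge0 (p0 a)) (opnorm_flip_pathB s t).
move: (opnorm (p0 a)) (opnorm (_ - _)) => P D P0 D4; nra.
Qed.

End UnitaryPath.

Lemma TC_witness1 (R : realType) n : TC_witness R n 1.
Proof.
exists (fun _ => matrix_cstar R (n * n)), (fun _ x => x), (fun _ => @flip_conj_path R n).
split=> [i|i y|x x0|i|i a].
- by split.
- by exists y.
- exact: x0 ord0.
- by split=> [a|t _]; [exact: flip_conj_path_cont | exact: flip_conj_path_star_hom].
- by split; [exact: flip_conj_path0 | exact: flip_conj_path1].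
Qed.

Lemma no_TC_witness0 (R : realType) n : (0 < n)%N -> ~ TC_witness R n 0.
Proof.
move=> n0 [B [q [sigma [_ _ q_inj _ _]]]].
have nn0 : (0 < n * n)%N by rewrite muln_gt0 n0.
have /matrixP /(_ (Ordinal nn0) (Ordinal nn0)) :=
  q_inj 1%:M (fun i => False_ind _ (notF (ltn_ord i))).
by rewrite !mxE eqxx => /eqP; rewrite oner_eq0.
Qed.

Theorem mainTheorem10 (R : realType) (n : nat) : (0 < n)%N -> TC_eq R n 1.
Proof.
move=> n0; split=> [|j]; first exact: TC_witness1.
by rewrite ltnS leqn0 => /eqP ->; exact: no_TC_witness0.
Qed.
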